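(* Let $A$ be a locally compact group and let $I$ be a linear functional on $C_0(A)$ such that $I(f)\geq I(l_h(f))$ for every non-negative $f\in C_0(A)$ and every $h\in A$. Then $I$ is left invariant, i.e. $I(l_h(f))=I(f)$ for all $h\in A$. The analogous statement holds with $r_h$ in place of $l_h$ (giving right invariance).
   Context: $C_0(A)$ is the space of continuous functions on $A$ with compact support; $l_h(f)(a)=f(ha)$ and $r_h(f)(a)=f(ah)$. *)

From HB Require Import structures.
From mathcomp Require Import all_boot all_order all_algebra.
From mathcomp Require Import all_classical all_reals all_analysis.
Set Implicit Arguments. Unset Strict Implicit. Unset Printing Implicit Defensive.
Import Order.TTheory GRing.Theory Num.Theory.
Import numFieldNormedType.Exports.
Local Open Scope classical_set_scope.
Local Open Scope ring_scope.

Definition group_axioms (A : Type) (mul : A -> A -> A) (inv : A -> A) (e : A) :=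
  [/\ forall x y z, mul x (mul y z) = mul (mul x y) z,
      forall x, mul e x = x, forall x, mul x e = x,
      forall x, mul (inv x) x = e & forall x, mul x (inv x) = e].

Definition locally_compact_group (A : topologicalType)
  (mul : A -> A -> A) (inv : A -> A) (e : A) : Prop :=
  [/\ group_axioms mul inv e,
      continuous (fun p : A * A => mul p.1 p.2),
      continuous inv,
      hausdorff_space A &
      locally_compact [set: A]].

(* C_0(A): continuous real-valued functions with compact support. *)
Definition Cc (A : topologicalType) (R : realType) (f : A -> R) : Prop :=
  continuous f /\ compact (closure [set x | f x != 0]).

(* Linear functional on C_0(A) (given as a map on all functions; only its
   values on C_0(A) matter). *)
Definition linear_on_Cc (A : topologicalType) (R : realType)
  (I : (A -> R) -> R) : Prop :=
  (forall f g, Cc f -> Cc g -> I (fun x => f x + g x) = I f + I g) /\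
  (forall (c : R) f, Cc f -> I (fun x => c * f x) = c * I f).

Definition ltransl (A : Type) (R : Type) (mul : A -> A -> A) (h : A) (f : A -> R) :=
  fun a => f (mul h a).
Definition rtransl (A : Type) (R : Type) (mul : A -> A -> A) (h : A) (f : A -> R) :=
  fun a => f (mul a h).

(* If both phi = l_h and its inverse l_(h^-1) can only decrease I on
   non-negative functions, then I (f o phi) <= I f = I ((f o phi) o phi^-1)
   <= I (f o phi), so I is invariant on non-negative functions.  A general
   f in C_0(A) is the difference (f + |f|) - |f| of two non-negative
   functions of C_0(A), and composition with phi commutes with this
   decomposition, so linearity gives invariance on all of C_0(A). *)
From mathcomp Require Import all_boot all_order all_algebra.
From mathcomp Require Import all_classical all_reals all_analysis.
Import Order.TTheory GRing.Theory Num.Theory.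
Import numFieldNormedType.Exports.
Local Open Scope classical_set_scope.
Local Open Scope ring_scope.

Section JointlyContinuousOperation.
Context {A : topologicalType} (op : A -> A -> A).
Hypothesis opc : continuous (fun p : A * A => op p.1 p.2).

Lemma continuous_opl (h : A) : continuous (fun x => op h x).
Proof. move=> x; exact: (cvg_comp _ _ (cvg_pair (cvg_cst h) cvg_id) (opc (h, x))). Qed.

Lemma continuous_opr (h : A) : continuous (fun x => op x h).
Proof. move=> x; exact: (cvg_comp _ _ (cvg_pair cvg_id (cvg_cst h)) (opc (x, h))). Qed.

End JointlyContinuousOperation.

Section CompactSupport.
Context {R : realType} {A : topologicalType}.
Implicit Types f g : A -> R.

Lemma Cc_supp_sub {f g} :
  Cc f -> continuous g -> (forall x, g x != 0 -> f x != 0) -> Cc g.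
Proof.
move=> [_ fK] gc gf; split => //.
apply: (subclosed_compact _ fK); first exact: closed_closure.
by apply: closureS => x; exact: gf.
Qed.

Lemma Cc_norm {f} : Cc f -> Cc (fun x => `|f x|).
Proof.
move=> fC; apply: (Cc_supp_sub fC) => [x|x]; last by rewrite normr_eq0.
exact: continuous_comp (fC.1 x) (@norm_continuous _ R^o _).
Qed.

Lemma CcZ (c : R) {f} : Cc f -> Cc (fun x => c * f x).
Proof.
move=> fC; apply: (Cc_supp_sub fC) => [x|x]; last by rewrite mulf_eq0 => /norP[].
exact: cvgM (cvg_cst c) (fC.1 x).
Qed.

Lemma CcD_norm {f} : Cc f -> Cc (fun x => f x + `|f x|).
Proof.
move=> fC; apply: (Cc_supp_sub fC) => [x|x].
  exact: continuousD (fC.1 x) ((Cc_norm fC).1 x).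
by apply: contra => /eqP ->; rewrite normr0 addr0.
Qed.

Lemma Cc_comp {f} {phi psi : A -> A} :
  continuous phi -> continuous psi -> cancel phi psi ->
  Cc f -> Cc (fun x => f (phi x)).
Proof.
move=> phic psic phiK [fc fK]; split=> [x|].
  exact: continuous_comp (phic x) (fc (phi x)).
have psiK : compact (psi @` closure [set x | f x != 0]).
  by apply: continuous_compact fK; exact: continuous_subspaceT.
apply: (subclosed_compact _ psiK); first exact: closed_closure.
have phi_cl : closed (phi @^-1` closure [set x | f x != 0]).
  exact: (continuous_closedP _).1 phic _ (@closed_closure _ _).
have sub : closure [set x | f (phi x) != 0] `<=` phi @^-1` closure [set x | f x != 0].
  rewrite [X in _ `<=` X]((closure_id _).1 phi_cl).
  by apply: closureS => x fx; exact: subset_closure.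
move=> x /sub phix.
by exists (phi x); rewrite ?phiK.
Qed.

End CompactSupport.

Section PositiveDecomposition.
Context {R : realType} {A : topologicalType} {I : (A -> R) -> R}.
Hypothesis linI : linear_on_Cc I.
Implicit Types f g : A -> R.

Lemma linear_on_CcB f g : Cc f -> Cc g -> I (fun x => f x - g x) = I f - I g.
Proof.
move=> fC gC; have [Iadd IZ] := linI.
have -> : (fun x => f x - g x) = (fun x => f x + (-1) * g x).
  by apply/funext => x; rewrite mulN1r.
by rewrite Iadd ?(IZ _ _ gC) ?mulN1r //; exact: CcZ.
Qed.

Lemma linear_on_Cc_norm_split {f} :
  Cc f -> I f = I (fun x => f x + `|f x|) - I (fun x => `|f x|).
Proof.
move=> fC; rewrite -linear_on_CcB; [|exact: CcD_norm|exact: Cc_norm].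
by congr I; apply/funext => x; rewrite addrK.
Qed.

Lemma eq_on_Cc_of_nonneg (phi : A -> A) :
  (forall f, Cc f -> Cc (fun x => f (phi x))) ->
  (forall f, Cc f -> (forall a, 0 <= f a) -> I (fun x => f (phi x)) = I f) ->
  forall f, Cc f -> I (fun x => f (phi x)) = I f.
Proof.
move=> Cc_phi eq_nonneg f fC.
rewrite (linear_on_Cc_norm_split fC) (linear_on_Cc_norm_split (Cc_phi f fC)).
have normf_ge0 a : 0 <= f a + `|f a|.
  by rewrite -lerBlDr sub0r; exact: lerNnormlW.
have fDC := CcD_norm fC; have fnC := Cc_norm fC.
by rewrite (eq_nonneg (fun x => f x + `|f x|)) // (eq_nonneg (fun x => `|f x|)).
Qed.

Lemma invariant_of_translations (tr : A -> A -> A) (inv : A -> A) :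
  (forall h, continuous (tr h)) ->
  (forall h, cancel (tr h) (tr (inv h))) ->
  (forall h, cancel (tr (inv h)) (tr h)) ->
  (forall f h, Cc f -> (forall a, 0 <= f a) -> I (fun x => f (tr h x)) <= I f) ->
  forall f h, Cc f -> I (fun x => f (tr h x)) = I f.
Proof.
move=> trc trK trVK tr_le f h.
apply: eq_on_Cc_of_nonneg => [g|g gC g_ge0]; first exact: Cc_comp (trc h) (trc (inv h)) (trK h).
apply/le_anti; rewrite tr_le //=.
have := tr_le _ (inv h) (Cc_comp (trc h) (trc (inv h)) (trK h) gC) (fun y => g_ge0 _).
suff -> : (fun x => g (tr h (tr (inv h) x))) = g by [].
by apply/funext => x; rewrite trVK.
Qed.

End PositiveDecomposition.

Theorem proposition5 (R : realType) (A : topologicalType)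
  (mul : A -> A -> A) (inv : A -> A) (e : A)
  (I : (A -> R) -> R) :
  locally_compact_group mul inv e ->
  linear_on_Cc I ->
  ((forall f h, Cc f -> (forall a, 0 <= f a) -> I (ltransl mul h f) <= I f) ->
     forall f h, Cc f -> I (ltransl mul h f) = I f) /\
  ((forall f h, Cc f -> (forall a, 0 <= f a) -> I (rtransl mul h f) <= I f) ->
     forall f h, Cc f -> I (rtransl mul h f) = I f).
Proof.
move=> [[mulA mul1g mulg1 mulVg mulgV] mulc _ _ _] linI.
split=> tr_le.
- apply: (invariant_of_translations linI mul inv _ _ _ tr_le) => h.
  + exact: continuous_opl.
  + by move=> x; rewrite mulA mulVg mul1g.
  + by move=> x; rewrite mulA mulgV mul1g.
- apply: (invariant_of_translations linI (fun h x => mul x h) inv _ _ _ tr_le) => h.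
  + exact: continuous_opr.
  + by move=> x; rewrite -mulA mulgV mulg1.
  + by move=> x; rewrite -mulA mulVg mulg1.
Qed.
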